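(* Let $S$ be a graded reduced affine monoid and $\tilde S$ as in the context. Suppose the defining congruence $\sim_S$ is generated by $\{(x^{\lambda},x^{\mu})\mid(\lambda,\mu)\in\Lambda\}$ for some $\Lambda\subset\mathbb{N}_0^{\mathcal{A}(S)}\times\mathbb{N}_0^{\mathcal{A}(S)}$. For each $\lambda\in\mathbb{N}_0^{\mathcal{A}(S)}$ such that $(\lambda,\mu)\in\Lambda$ or $(\mu,\lambda)\in\Lambda$ for some $\mu$, and each integer $0\le i\le|a^{\lambda}|$, choose $\lambda[i]\in\mathbb{N}_0^{\mathcal{A}(\tilde S)}$ with $\kappa(\lambda[i])=\lambda$ and $\delta(\lambda[i])=i$. Then the defining congruence $\sim_{\tilde S}$ of $\tilde S$ is generated by $\{(x^{\lambda[i]},x^{\mu[i]})\mid(\lambda,\mu)\in\Lambda,\ 0\le i\le|a^{\lambda}|\}\cup\{(x_{a[k]}x_{b[l]},x_{a[k+1]}x_{b[l-1]})\mid a,b\in\mathcal{A}(S),\ 0\le k\le|a|-1,\ 1\le l\le|b|\}$.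
   Context: A monoid is a commutative cancellative semigroup with identity; affine means a finitely generated submonoid of a finitely generated free abelian group; reduced means the identity is the only unit. $S$ (written multiplicatively) is graded: $S=\bigsqcup_{d\in\mathbb{N}_0}S_d$ with $S_dS_e\subseteq S_{d+e}$, $|s|=d$ for $s\in S_d$. $\mathcal{A}(S)$ is the set of atoms; $a^{\lambda}=\prod_a a^{\lambda(a)}$. For a reduced affine monoid $T$ with atoms $\mathcal{A}(T)$, its defining congruence $\sim_T$ is the congruence on the free commutative monoid $\{x^{\alpha}\mid\alpha\in\mathbb{N}_0^{\mathcal{A}(T)}\}$ on indeterminates $x_t$ ($t\in\mathcal{A}(T)$) with $x^{\alpha}\sim_T x^{\gamma}$ iff $\prod t^{\alpha(t)}=\prod t^{\gamma(t)}$ in $T$. Define $\tilde S=\{s[i]\mid s\in S,\ 0\le i\le|s|\}$ with $s[i]\cdot t[j]=(st)[i+j]$; its atoms are $\mathcal{A}(\tilde S)=\{a[i]\mid a\in\mathcal{A}(S),0\le i\le|a|\}$. Define $\kappa:\mathbb{N}_0^{\mathcal{A}(\tilde S)}\to\mathbb{N}_0^{\mathcal{A}(S)}$, $\kappa(\lambda)(a)=\sum_{i=0}^{|a|}\lambda(a[i])$, and $\delta(\lambda)=\sum_{a[i]}i\,\lambda(a[i])$. *)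

From HB Require Import structures.
From mathcomp Require Import all_boot all_order all_algebra.
Set Implicit Arguments. Unset Strict Implicit. Unset Printing Implicit Defensive.
Import Order.TTheory GRing.Theory Num.Theory.
Local Open Scope ring_scope.

(* Monoids are written additively as subsets of an abelian group V;
   the ambient group for S is Z^n = 'rV[int]_n, for S~ it is Z^n x Z. *)
Section Monoids.
Variable V : zmodType.

Definition submonoid (S : V -> Prop) : Prop :=
  S 0 /\ forall x y, S x -> S y -> S (x + y).

Definition fingen (S : V -> Prop) : Prop :=
  exists gens : seq V, (forall g, g \in gens -> S g) /\
    forall s, S s -> exists c : nat -> nat, s = \sum_(i < size gens) gens`_i *+ c i.

Definition reduced (S : V -> Prop) : Prop :=
  forall x, S x -> S (- x) -> x = 0.

Definition is_atom (S : V -> Prop) (a : V) : Prop :=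
  S a /\ a != 0 /\ forall b c, S b -> S c -> a = b + c -> b = 0 \/ c = 0.

(* grading S = disjoint union of S_d with S_d S_e in S_(d+e); |s| = deg s *)
Definition graded (S : V -> Prop) (deg : V -> nat) : Prop :=
  forall s t, S s -> S t -> deg (s + t) = (deg s + deg t)%N.

(* S~ = { s[i] | s in S, 0 <= i <= |s| }, with s[i] encoded as (s, i) *)
Definition tilde (S : V -> Prop) (deg : V -> nat) : V * int -> Prop :=
  fun p => exists (s : V) (i : nat), S s /\ (i <= deg s)%N /\ p = (s, i%:Z).

End Monoids.

(* exponent vectors N_0^{A}, where the atom set A is enumerated by a uniq
   sequence of length k; position j stands for the indeterminate x_{A`_j} *)
Definition expo (k : nat) := {ffun 'I_k -> nat}.

Definition addx (k : nat) (f g : expo k) : expo k := [ffun i => (f i + g i)%N].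

Definition evalm {V : zmodType} (A : seq V) (al : expo (size A)) : V :=
  \sum_(i < size A) A`_i *+ al i.

Arguments evalm {V} A al.
Definition defcong {V : zmodType} (A : seq V) (al ga : expo (size A)) : Prop :=
  evalm A al = evalm A ga.

Arguments defcong {V} A al ga.
Definition is_congruence (k : nat) (C : expo k -> expo k -> Prop) : Prop :=
  (forall f, C f f) /\ (forall f g, C f g -> C g f) /\
  (forall f g h, C f g -> C g h -> C f h) /\
  (forall f g h, C f g -> C (addx f h) (addx g h)).

Definition gen_cong (k : nat) (R : expo k -> expo k -> Prop) (f g : expo k) : Prop :=
  forall C, is_congruence C -> (forall p q, R p q -> C p q) -> C f g.

Arguments gen_cong {k} R f g.
Definition generates (k : nat) (R C : expo k -> expo k -> Prop) : Prop :=
  forall f g, C f g <-> gen_cong R f g.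

Arguments generates {k} R C.
Definition kappa {V : zmodType} (A : seq V) (At : seq (V * int))
  (l : expo (size At)) : expo (size A) :=
  [ffun j : 'I_(size A) => (\sum_(k < size At | (nth (0 : V * int)%R At k).1 == nth (0 : V)%R A j) l k)%N].

Arguments kappa {V} A At l.
Definition delta {V : zmodType} (At : seq (V * int)) (l : expo (size At)) : int :=
  \sum_(k < size At) (l k)%:Z * (At`_k).2.

Arguments delta {V} At l.
Definition unitx {V : zmodType} (At : seq (V * int)) (x : V * int) : expo (size At) :=
  [ffun j : 'I_(size At) => nat_of_bool (At`_j == x)].
Arguments unitx {V} At x.

From mathcomp Require Import all_boot all_order all_algebra.
From mathcomp Require Import zify.
Set Implicit Arguments. Unset Strict Implicit. Unset Printing Implicit Defensive.
Import GRing.Theory.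

(* The element s[i] of S~ is the pair (s, i), so x^f ~ x^g in S~ iff
   x^kappa(f) ~ x^kappa(g) in S and delta f = delta g.  The moves
   x_a[k] x_b[l] -> x_a[k+1] x_b[l-1] preserve kappa and delta, and they
   connect any two monomials with the same kappa and delta: pushing as much
   level as possible onto a single variable x_a[t], with a an atom occurring
   in kappa, makes t depend only on |a| and delta, and removing that variable
   leaves a smaller instance.  Therefore relating l and l' in N_0^A(S) when all
   their lifts of equal delta are congruent modulo the moves and the lifted
   relations gives a congruence; it contains Lambda, hence it contains ~_S. *)

Lemma sum_nat_gt0P (I : finType) (P : pred I) (E : I -> nat) :
  (0 < \sum_(i | P i) E i)%N -> exists2 i, P i & (0 < E i)%N.
Proof. by rewrite lt0n sum_nat_eq0 => /forall_inPn [i Pi]; rewrite -lt0n; exists i. Qed.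

Section Exponents.
Variable k : nat.
Implicit Types (f g h : expo k) (i : 'I_k).

Definition expo0 : expo k := [ffun=> 0%N].
Definition expo1 i : expo k := [ffun j => nat_of_bool (j == i)].
Definition expo_deg f : nat := \sum_i f i.

Lemma addxC f g : addx f g = addx g f.
Proof. by apply/ffunP => i; rewrite !ffunE addnC. Qed.

Lemma addxA f g h : addx f (addx g h) = addx (addx f g) h.
Proof. by apply/ffunP => i; rewrite !ffunE addnA. Qed.

Lemma addxI h : injective (addx h).
Proof.
by move=> f g /ffunP Efg; apply/ffunP => i; have := Efg i; rewrite !ffunE; apply: addnI.
Qed.

Lemma expo_degD f g : expo_deg (addx f g) = (expo_deg f + expo_deg g)%N.
Proof. by rewrite -big_split; apply: eq_bigr => i _; rewrite ffunE. Qed.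

Lemma expo_deg1 i : expo_deg (expo1 i) = 1%N.
Proof. by rewrite /expo_deg (bigD1 i) //= big1 => [|j /negbTE Nji]; rewrite ffunE ?eqxx ?Nji. Qed.

Lemma expo_split f i : (0 < f i)%N -> exists f', f = addx (expo1 i) f'.
Proof.
move=> fi_gt0; exists [ffun j => f j - (j == i)]%N.
apply/ffunP => j; rewrite !ffunE; case: eqP => [->|_] /=; lia.
Qed.

Lemma expo_ind (P : expo k -> Prop) :
  P expo0 -> (forall i f, P f -> P (addx (expo1 i) f)) -> forall f, P f.
Proof.
move=> P0 P1 f; move Ed : (expo_deg f) => d; elim: d f Ed => [|d IH] f Ed.
  suff -> : f = expo0 by [].
  apply/ffunP => i; apply/eqP; rewrite ffunE -leqn0 -Ed /expo_deg (bigD1 i) //=.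
  exact: leq_addr.
have [i _ /expo_split [f' Ef]] : exists2 i, true & (0 < f i)%N.
  by apply: sum_nat_gt0P; rewrite [X in (0 < X)%N]Ed.
by rewrite Ef; apply/P1/IH; move: Ed; rewrite Ef expo_degD expo_deg1 add1n => -[].
Qed.

End Exponents.

Arguments expo0 {k}.

Section Congruences.
Variables (k : nat) (C : expo k -> expo k -> Prop).
Hypothesis congC : is_congruence C.

Lemma cong_refl f : C f f.
Proof. exact: congC.1. Qed.

Lemma cong_sym f g : C f g -> C g f.
Proof. exact: congC.2.1. Qed.

Lemma cong_trans f g h : C f g -> C g h -> C f h.
Proof. exact: congC.2.2.1. Qed.

Lemma cong_addr f g h : C f g -> C (addx f h) (addx g h).
Proof. exact: congC.2.2.2. Qed.

Lemma cong_addl f g h : C f g -> C (addx h f) (addx h g).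
Proof. by rewrite ![addx h _]addxC; apply: cong_addr. Qed.

End Congruences.

Section GeneratedCongruence.
Variables (k : nat) (R : expo k -> expo k -> Prop).

Lemma gen_congP : is_congruence (gen_cong R).
Proof.
split; [|split; [|split]].
- by move=> f C congC _; apply: cong_refl.
- by move=> f g Rfg C congC RC; apply: (cong_sym congC); apply: Rfg.
- move=> f g h Rfg Rgh C congC RC.
  exact: (cong_trans congC (Rfg C congC RC) (Rgh C congC RC)).
- by move=> f g h Rfg C congC RC; apply: (cong_addr congC); apply: Rfg.
Qed.

Lemma gen_cong_rel f g : R f g -> gen_cong R f g.
Proof. by move=> Rfg C _; apply. Qed.

Lemma generates_rel C f g : generates R C -> R f g -> C f g.
Proof. by move=> genC Rfg; apply/genC; apply: gen_cong_rel. Qed.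

End GeneratedCongruence.

Section Evaluation.
Variables (W : zmodType) (B : seq W).
Local Open Scope ring_scope.

Lemma evalmD (f g : expo (size B)) : evalm B (addx f g) = evalm B f + evalm B g.
Proof. by rewrite /evalm -big_split; apply: eq_bigr => i _; rewrite ffunE mulrnDr. Qed.

Lemma evalm1 (i : 'I_(size B)) : evalm B (expo1 i) = B`_i.
Proof.
by rewrite /evalm (bigD1 i) //= big1 => [|j /negbTE Nji]; rewrite ffunE ?eqxx ?Nji ?addr0.
Qed.

Lemma evalm0 : evalm B expo0 = 0.
Proof. by rewrite /evalm big1 // => i _; rewrite ffunE. Qed.

Lemma defcong_cong : is_congruence (defcong B).
Proof.
rewrite /defcong; split; [|split; [|split]] => [f | f g -> | f g h -> | f g h Efg] //.
by rewrite !evalmD Efg.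
Qed.

End Evaluation.

Section UnitVectors.
Variables (W : zmodType) (B : seq (W * int)).
Hypothesis uB : uniq B.
Local Open Scope ring_scope.

Lemma unitx_nth (i : 'I_(size B)) : unitx B B`_i = expo1 i.
Proof. by apply/ffunP => j; rewrite !ffunE nth_uniq. Qed.

Lemma evalm_unitx x : x \in B -> evalm B (unitx B x) = x.
Proof.
move=> Bx; have ltx : (index x B < size B)%N by rewrite index_mem.
have <- : B`_(Ordinal ltx) = x by rewrite nth_index.
by rewrite unitx_nth evalm1.
Qed.

End UnitVectors.

Section Tilde.
Variables (V : zmodType) (S : V -> Prop) (deg : V -> nat).
Hypotheses (monS : submonoid S) (gradedS : graded S deg).
Local Open Scope ring_scope.

Lemma deg0 : deg 0 = 0%N.
Proof. by have := gradedS monS.1 monS.1; rewrite addr0; lia. Qed.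

Lemma tilde_atomP x : is_atom (tilde S deg) x <->
  exists a (t : nat), [/\ x = (a, t%:Z), is_atom S a & (t <= deg a)%N].
Proof.
split.
- case=> [[s [i [Ss [i_le ->]]]] [nz_x atom_x]]; exists s, i; split=> //; split=> //; split.
    by apply: contra nz_x => /eqP s0; move: i_le; rewrite s0 deg0 leqn0 => /eqP ->.
  move=> b c Sb Sc Es.
  have deg_s : deg s = (deg b + deg c)%N by rewrite Es; apply: gradedS.
  pose j := minn i (deg b).
  have Tb : tilde S deg (b, j%:Z) by exists b, j; split=> //; split=> //; exact: geq_minr.
  have Tc : tilde S deg (c, (i - j)%:Z) by exists c, (i - j)%N; split=> //; split=> //; lia.
  have Ei : (s, i%:Z) = (b, j%:Z) + (c, (i - j)%:Z).
    by rewrite Es; congr (_, _); rewrite -PoszD; congr Posz; lia.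
  by case: (atom_x _ _ Tb Tc Ei) => /(congr1 fst) /= ->; [left | right].
- case=> a [t [-> [Sa [nz_a atom_a]] t_le]]; split; first by exists a, t.
  split; first by apply: contra nz_a => /eqP /(congr1 fst) /= ->.
  move=> _ _ [b [i [Sb [i_le ->]]]] [c [j [Sc [j_le ->]]]] /(congr1 fst) /= Ea.
  case: (atom_a _ _ Sb Sc Ea) => E0; [left | right]; move: i_le j_le; rewrite E0 deg0 leqn0;
    by [move=> /eqP -> | move=> _ /eqP ->].
Qed.

Variables (A : seq V) (At : seq (V * int)).
Hypotheses (uA : uniq A) (A_atoms : forall x, x \in A <-> is_atom S x).
Hypotheses (uAt : uniq At) (At_atoms : forall x, x \in At <-> is_atom (tilde S deg) x).

Lemma atom_nth (j : 'I_(size A)) : is_atom S A`_j.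
Proof. by apply/A_atoms/mem_nth. Qed.

Lemma mem_At a (t : nat) : is_atom S a -> (t <= deg a)%N -> (a, t%:Z) \in At.
Proof. by move=> atom_a t_le; apply/At_atoms/tilde_atomP; exists a, t. Qed.

Lemma nth_At_spec (k : 'I_(size At)) :
  exists a (t : nat), [/\ At`_k = (a, t%:Z), a \in A & (t <= deg a)%N].
Proof.
have /At_atoms /tilde_atomP [a [t [-> /A_atoms A_a t_le]]] := mem_nth 0 (ltn_ord k).
by exists a, t.
Qed.

Lemma base_subproof (k : 'I_(size At)) : leq (index (At`_k).1 A).+1 (size A).
Proof. by rewrite index_mem; have [a [t [-> A_a _]]] := nth_At_spec k. Qed.

Definition base (k : 'I_(size At)) : 'I_(size A) := Ordinal (base_subproof k).
Definition level (k : 'I_(size At)) : nat := absz (At`_k).2.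

Lemma nth_At (k : 'I_(size At)) : At`_k = (A`_(base k), (level k)%:Z).
Proof. by have [a [t [Ek A_a _]]] := nth_At_spec k; rewrite /level /base /= Ek /= nth_index. Qed.

Lemma level_le (k : 'I_(size At)) : leq (level k) (deg A`_(base k)).
Proof. by have [a [t [Ek A_a t_le]]] := nth_At_spec k; rewrite /level /base /= Ek /= nth_index. Qed.

Lemma nth_AtP (k : 'I_(size At)) (j : 'I_(size A)) (t : nat) :
  At`_k = (A`_j, t%:Z) -> base k = j /\ level k = t.
Proof.
rewrite nth_At => -[Ej ->]; split=> //; apply/val_inj/eqP.
by rewrite -(nth_uniq 0 (ltn_ord _) (ltn_ord _) uA) Ej.
Qed.

Lemma At_index (j : 'I_(size A)) (t : nat) :
  leq t (deg A`_j) -> exists k : 'I_(size At), At`_k = (A`_j, t%:Z).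
Proof.
move=> t_le; have At_jt := mem_At (atom_nth j) t_le.
have ltk : leq (index (A`_j, t%:Z) At).+1 (size At) by rewrite index_mem.
by exists (Ordinal ltk); rewrite nth_index.
Qed.

Lemma nth_At_inj (k k' : 'I_(size At)) : At`_k = At`_k' -> k = k'.
Proof. by move=> /eqP; rewrite nth_uniq // => /eqP /val_inj. Qed.

Lemma defcong_move a b (k l : nat) : is_atom S a -> is_atom S b ->
    (k < deg a)%N -> (0 < l <= deg b)%N ->
  defcong At (addx (unitx At (a, k%:Z)) (unitx At (b, l%:Z)))
             (addx (unitx At (a, k.+1%:Z)) (unitx At (b, l.-1%:Z))).
Proof.
move=> atom_a atom_b lt_k /andP [l_gt0 le_l].
rewrite /defcong !evalmD !(evalm_unitx uAt) ?mem_At ?(ltnW lt_k) ?(leq_trans (leq_pred l)) //.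
by congr (_, _); rewrite -!PoszD addSnnS prednK.
Qed.

Implicit Types (f g : expo (size At)) (l : expo (size A)).

Local Notation kappa := (kappa A At).

Definition deltan f : nat := \sum_k f k * level k.

Lemma delta_deltan f : delta At f = (deltan f)%:Z.
Proof.
rewrite /delta /deltan (big_morph Posz PoszD (erefl 0%:Z)).
by apply: eq_bigr => k _; rewrite PoszM nth_At.
Qed.

Lemma kappaE f (j : 'I_(size A)) : kappa f j = (\sum_(k | base k == j) f k)%N.
Proof. by rewrite ffunE; apply: eq_bigl => k; rewrite nth_At nth_uniq. Qed.

Lemma kappaD f g : kappa (addx f g) = addx (kappa f) (kappa g).
Proof. by apply/ffunP => j; rewrite !ffunE -big_split; apply: eq_bigr => k _; rewrite ffunE. Qed.

Lemma kappa1 (k : 'I_(size At)) : kappa (expo1 k) = expo1 (base k).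
Proof.
apply/ffunP => j; rewrite kappaE ffunE big_mkcond (bigD1 k) //= big1 => [|i /negbTE Nik].
  by rewrite ffunE eqxx addn0 eq_sym; case: eqP.
by rewrite ffunE Nik; case: ifP.
Qed.

Lemma kappa0 : kappa expo0 = expo0.
Proof. by apply/ffunP => j; rewrite kappaE !ffunE big1 // => k _; rewrite ffunE. Qed.

Lemma kappa_eq0 f : kappa f = expo0 -> f = expo0.
Proof.
move=> /ffunP f0; apply/ffunP => k; have := f0 (base k).
rewrite kappaE !ffunE (bigD1 k) //=; lia.
Qed.

Lemma kappa_gt0 f (j : 'I_(size A)) : (0 < kappa f j)%N -> exists2 k, base k = j & (0 < f k)%N.
Proof. by rewrite kappaE => /sum_nat_gt0P [k /eqP]; exists k. Qed.

Lemma deltanD f g : deltan (addx f g) = (deltan f + deltan g)%N.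
Proof. by rewrite /deltan -big_split; apply: eq_bigr => k _; rewrite ffunE mulnDl. Qed.

Lemma deltan1 (k : 'I_(size At)) : deltan (expo1 k) = level k.
Proof.
rewrite /deltan (bigD1 k) //= big1 => [|i /negbTE Nik]; rewrite ffunE ?eqxx ?Nik //.
by rewrite mul1n addn0.
Qed.

Lemma deltan0 : deltan expo0 = 0%N.
Proof. by rewrite /deltan big1 // => k _; rewrite ffunE. Qed.

Lemma evalm_At f : evalm At f = (evalm A (kappa f), (deltan f)%:Z).
Proof.
elim/expo_ind: f => [|k f IH]; first by rewrite kappa0 deltan0 !evalm0.
by rewrite evalmD IH kappaD deltanD deltan1 evalmD kappa1 !evalm1 nth_At PoszD.
Qed.

Lemma defcong_At f g :
  defcong At f g <-> defcong A (kappa f) (kappa g) /\ deltan f = deltan g.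
Proof.
by rewrite /defcong !evalm_At; split=> [[-> ->] | [-> ->]].
Qed.

Lemma S_evalm l : S (evalm A l).
Proof.
elim/expo_ind: l => [|j l IH]; first by rewrite evalm0; exact: monS.1.
by rewrite evalmD evalm1; apply: monS.2 IH; case: (atom_nth j).
Qed.

Lemma deg_evalmD l l' : deg (evalm A (addx l l')) = (deg (evalm A l) + deg (evalm A l'))%N.
Proof. by rewrite evalmD; apply: gradedS; apply: S_evalm. Qed.

Lemma deltan_le f : (deltan f <= deg (evalm A (kappa f)))%N.
Proof.
elim/expo_ind: f => [|k f IH]; first by rewrite deltan0.
by rewrite deltanD kappaD deg_evalmD deltan1 kappa1 evalm1 leq_add // level_le.
Qed.

Lemma exists_fibre l (t : nat) :
  (t <= deg (evalm A l))%N -> exists f, kappa f = l /\ deltan f = t.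
Proof.
elim/expo_ind: l t => [|j l IH] t.
  by rewrite evalm0 deg0 leqn0 => /eqP ->; exists expo0; rewrite kappa0 deltan0.
rewrite deg_evalmD evalm1 => t_le.
have [k /nth_AtP [base_k level_k]] := At_index (geq_minr t (deg A`_j)).
have [|f [kappa_f deltan_f]] := IH (t - minn t (deg A`_j))%N; first lia.
exists (addx (expo1 k) f); rewrite kappaD kappa1 base_k kappa_f deltanD deltan1 level_k deltan_f.
split=> //; lia.
Qed.

Section Moves.
Variable R : expo (size At) -> expo (size At) -> Prop.
Hypothesis R_moves : forall a b (k l : nat), is_atom S a -> is_atom S b ->
  (k < deg a)%N -> (0 < l <= deg b)%N ->
  R (addx (unitx At (a, k%:Z)) (unitx At (b, l%:Z)))
    (addx (unitx At (a, k.+1%:Z)) (unitx At (b, l.-1%:Z))).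

Local Notation G := (gen_cong R).
Let congG : is_congruence G := gen_congP R.

Lemma gen_cong_move_up (k : 'I_(size At)) f :
    leq (level k).+1 (deg A`_(base k)) -> (0 < deltan f)%N ->
  exists (k' : 'I_(size At)) f', [/\ At`_k' = (A`_(base k), (level k).+1%:Z),
    G (addx (expo1 k) f) (addx (expo1 k') f'), kappa f' = kappa f & deltan f = (deltan f').+1].
Proof.
move=> lt_k /sum_nat_gt0P [k2 _]; rewrite muln_gt0 => /andP [f_k2 level_k2].
have [f0 ->] := expo_split f_k2.
have [k' Ek'] := At_index lt_k.
have [k2' Ek2'] := At_index (leq_trans (leq_pred _) (level_le k2)).
have [base_k2' level_k2'] := nth_AtP Ek2'.
exists k', (addx (expo1 k2') f0); split=> //.
- rewrite !addxA; apply: (cong_addr congG); apply: gen_cong_rel.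
  rewrite -!unitx_nth // Ek' Ek2' !nth_At.
  by apply: R_moves; rewrite ?level_k2 ?level_le //; apply: atom_nth.
- by rewrite !kappaD !kappa1 base_k2'.
- by rewrite !deltanD !deltan1 level_k2'; lia.
Qed.

Lemma gen_cong_raise (d : nat) (k : 'I_(size At)) f :
    leq (level k + d) (deg A`_(base k)) -> (d <= deltan f)%N ->
  exists (k' : 'I_(size At)) f', [/\ At`_k' = (A`_(base k), (level k + d)%:Z),
    G (addx (expo1 k) f) (addx (expo1 k') f'), kappa f' = kappa f & deltan f = (deltan f' + d)%N].
Proof.
elim: d k f => [|d IH] k f le_deg le_deltan.
  by exists k, f; rewrite !addn0 nth_At; split=> //; exact (cong_refl congG _).
have lt_k : leq (level k).+1 (deg A`_(base k)) by lia.
have [|k1 [f1 [Ek1 Gf1 kappa_f1 deltan_f1]]] := gen_cong_move_up (f := f) lt_k; first lia.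
have [base_k1 level_k1] := nth_AtP Ek1.
have [||k' [f' [Ek' Gf' kappa_f' deltan_f']]] := IH k1 f1; rewrite ?base_k1 ?level_k1; try lia.
exists k', f'; split.
- by rewrite Ek' base_k1 level_k1 addSnnS.
- exact (cong_trans congG Gf1 Gf').
- by rewrite kappa_f' kappa_f1.
- lia.
Qed.

(* The level reached, [minn (deg A`_j) (deltan f)], is the same for all [f] in a fibre. *)
Lemma gen_cong_saturate (j : 'I_(size A)) l f : kappa f = addx (expo1 j) l ->
  exists (k' : 'I_(size At)) f', [/\ At`_k' = (A`_j, (minn (deg A`_j) (deltan f))%:Z),
    G f (addx (expo1 k') f'), kappa f' = l & deltan f = (deltan f' + minn (deg A`_j) (deltan f))%N].
Proof.
move=> kappa_f; have [|k base_k f_k] := kappa_gt0 (f := f) (j := j).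
  by rewrite kappa_f !ffunE eqxx.
have [f0 Ef] := expo_split f_k.
have deltan_f : deltan f = (level k + deltan f0)%N by rewrite Ef deltanD deltan1.
have le_k := level_le k; rewrite base_k in le_k.
have [||k' [f' [Ek' Gf' kappa_f' deltan_f']]] :=
  @gen_cong_raise (minn (deg A`_j) (deltan f) - level k) k f0; rewrite ?base_k; try lia.
exists k', f'; split.
- by rewrite Ek' base_k; congr (_, Posz _); lia.
- by rewrite Ef.
- by apply: (@addxI _ (expo1 j)); rewrite kappa_f' -kappa_f Ef kappaD kappa1 base_k.
- lia.
Qed.

Lemma gen_cong_fibre f g : kappa f = kappa g -> deltan f = deltan g -> G f g.
Proof.
suff fibre l : forall f g, kappa f = l -> kappa g = l -> deltan f = deltan g -> G f g.
  by move=> kappa_fg; apply: fibre.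
elim/expo_ind: l => [|j l IH] {}f {}g kappa_f kappa_g deltan_fg.
  by rewrite (kappa_eq0 kappa_f) (kappa_eq0 kappa_g); exact (cong_refl congG _).
have [kf [f' [Ekf Gf kappa_f' deltan_f']]] := gen_cong_saturate kappa_f.
have [kg [g' [Ekg Gg kappa_g' deltan_g']]] := gen_cong_saturate kappa_g.
have Ekk : kg = kf by apply: nth_At_inj; rewrite Ekf Ekg deltan_fg.
rewrite {}Ekk in Gg.
apply: (cong_trans congG Gf); apply: (cong_trans congG _ (cong_sym congG Gg)).
by apply: (cong_addl congG); apply: IH => //; lia.
Qed.

End Moves.

Section Lifting.
Variable C : expo (size At) -> expo (size At) -> Prop.
Hypotheses (congC : is_congruence C)
  (C_fibre : forall f g, kappa f = kappa g -> deltan f = deltan g -> C f g).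

Definition fibre_rel l l' : Prop := evalm A l = evalm A l' /\
  forall f g, kappa f = l -> kappa g = l' -> deltan f = deltan g -> C f g.

Lemma fibre_rel_cong : is_congruence fibre_rel.
Proof.
split; [|split; [|split]].
- by move=> l; split=> // f g kappa_f kappa_g; apply: C_fibre; rewrite kappa_f kappa_g.
- move=> l l' [E Cll']; split=> // f g kappa_f kappa_g deltan_fg.
  by apply: (cong_sym congC); apply: Cll'.
- move=> l l' l'' [E Cll'] [E' Cl'l'']; split; first by rewrite E.
  move=> f h kappa_f kappa_h deltan_fh.
  have [|g [kappa_g deltan_g]] := exists_fibre (l := l') (t := deltan f).
    by rewrite -E -kappa_f deltan_le.
  by apply: (cong_trans congC (Cll' f g _ _ _)) => //; apply: Cl'l'' => //; rewrite deltan_g.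
- move=> l l' h [E Cll']; split; first by rewrite !evalmD E.
  move=> f g kappa_f kappa_g deltan_fg.
  have := deltan_le f; rewrite kappa_f deg_evalmD => le_f.
  have [|f1 [kappa_f1 deltan_f1]] :=
    exists_fibre (l := l) (t := minn (deltan f) (deg (evalm A l))); first exact: geq_minr.
  have [|f2 [kappa_f2 deltan_f2]] :=
    exists_fibre (l := h) (t := deltan f - minn (deltan f) (deg (evalm A l))); first lia.
  have [|g1 [kappa_g1 deltan_g1]] :=
    exists_fibre (l := l') (t := minn (deltan f) (deg (evalm A l))); first by rewrite -E geq_minr.
  apply: (cong_trans congC (C_fibre (g := addx f1 f2) _ _)).
  - by rewrite kappaD kappa_f1 kappa_f2.
  - by rewrite deltanD deltan_f1 deltan_f2; lia.
  apply: (cong_trans congC (cong_addr congC _ (Cll' f1 g1 kappa_f1 kappa_g1 _))).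
    by rewrite deltan_f1 deltan_g1.
  apply: C_fibre; first by rewrite kappaD kappa_g1 kappa_f2.
  by rewrite deltanD deltan_g1 deltan_f2 -deltan_fg; lia.
Qed.

Lemma defcong_At_sub (Lam : expo (size A) -> expo (size A) -> Prop) :
  generates Lam (defcong A) ->
  (forall l m, Lam l m -> forall t : nat, (t <= deg (evalm A l))%N ->
     exists f g, [/\ kappa f = l, kappa g = m, deltan f = t, deltan g = t & C f g]) ->
  forall f g, defcong At f g -> C f g.
Proof.
move=> genA Lam_lifts f g /defcong_At [/genA gen_fg deltan_fg].
have Lam_fibre l m : Lam l m -> fibre_rel l m.
  move=> Lam_lm; split; first exact: generates_rel genA Lam_lm.
  move=> f' g' kappa_f' kappa_g' deltan_fg'.
  have := deltan_le f'; rewrite kappa_f'.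
  move=> /(Lam_lifts l m Lam_lm) [f1 [g1 [kf1 kg1 df1 dg1 Cfg1]]].
  apply: (cong_trans congC (C_fibre _ _)) (cong_trans congC Cfg1 (C_fibre _ _)); congruence.
exact: (gen_fg _ fibre_rel_cong Lam_fibre).2.
Qed.

End Lifting.

End Tilde.

Unset Implicit Arguments.
Local Open Scope ring_scope.

Theorem theorem4p4 (n : nat) (S : 'rV[int]_n -> Prop) (deg : 'rV[int]_n -> nat)
  (A : seq 'rV[int]_n) (At : seq ('rV[int]_n * int))
  (Lam : expo (size A) -> expo (size A) -> Prop)
  (lift : expo (size A) -> nat -> expo (size At)) :
  submonoid S -> fingen S -> reduced S -> graded S deg ->
  uniq A -> (forall x, x \in A <-> is_atom S x) ->
  uniq At -> (forall x, x \in At <-> is_atom (tilde S deg) x) ->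
  generates Lam (defcong A) ->
  (forall l, (exists m, Lam l m \/ Lam m l) ->
     forall i : nat, (i <= deg (evalm A l))%N ->
       kappa A At (lift l i) = l /\ delta At (lift l i) = i%:Z) ->
  generates
    (fun f g =>
       (exists l m (i : nat), Lam l m /\ (i <= deg (evalm A l))%N /\
                              f = lift l i /\ g = lift m i)
       \/
       (exists (a b : 'rV[int]_n) (k l : nat),
          is_atom S a /\ is_atom S b /\ (k.+1 <= deg a)%N /\ (1 <= l <= deg b)%N /\
          f = addx (unitx At (a, k%:Z)) (unitx At (b, l%:Z)) /\
          g = addx (unitx At (a, (k.+1)%:Z)) (unitx At (b, (l.-1)%:Z))))
    (defcong At).
Proof.
move=> monS _ _ gradedS uA A_atoms uAt At_atoms genA lift_spec f g.
have lifts_fibre l m i : Lam l m -> (i <= deg (evalm A l))%N ->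
    [/\ kappa A At (lift l i) = l, kappa A At (lift m i) = m,
        deltan (lift l i) = i & deltan (lift m i) = i].
  move=> Lam_lm le_i; have Elm := generates_rel genA Lam_lm.
  have [|kappa_l delta_l] := lift_spec l _ i le_i; first by exists m; left.
  have le_m : (i <= deg (evalm A m))%N by rewrite -Elm.
  have [|kappa_m delta_m] := lift_spec m _ i le_m; first by exists l; right.
  move: delta_l delta_m; rewrite !(delta_deltan monS gradedS A_atoms At_atoms).
  by split=> //; case: delta_l; case: delta_m.
split=> [defcong_fg | gen_fg].
- refine (defcong_At_sub monS gradedS uA A_atoms uAt At_atoms (gen_congP _) _ genA _ defcong_fg).
    refine (gen_cong_fibre monS gradedS uA A_atoms uAt At_atoms _) => a b k l *.
    by right; exists a, b, k, l.
  move=> l m Lam_lm i le_i.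
  have [kappa_l kappa_m deltan_l deltan_m] := lifts_fibre l m i Lam_lm le_i.
  exists (lift l i), (lift m i); split=> //.
  by apply gen_cong_rel; left; exists l, m, i.
- apply: gen_fg (defcong_cong At) _ => p q [[l [m [i [Lam_lm [le_i [-> ->]]]]]] | ].
    apply/(defcong_At monS gradedS uA A_atoms At_atoms).
    by have [-> -> -> ->] := lifts_fibre l m i Lam_lm le_i; split=> //; apply: generates_rel genA _.
  move=> [a [b [k [l [atom_a [atom_b [lt_k [le_l [-> ->]]]]]]]]].
  exact: (defcong_move monS gradedS uAt At_atoms).
Qed.
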